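(* Let $f_\bullet\colon X\to Z$ be a set mapping between finite metric spaces, $V=\mathrm{PH}_0(X)$, $U=\mathrm{PH}_0(Z)$, $f_0\colon V_0\to U_0$ the induced linear map, and set $A^\pm=f_0(\ker^\pm_a(V))$ and $B^\pm=\ker^\pm_b(U)$. Then for all $a\in S^V$ and $b\in S^U$, $$\mathcal{M}^0_f(a,b)=\dim\left(\frac{A^++B^-}{A^-+B^-}\cap\frac{A^-+B^+}{A^-+B^-}\right),$$ where both quotients are regarded as subspaces of $U_0/(A^-+B^-)$.
   Context: All vector spaces are over $\mathbb{Z}_2$. For a finite metric space $(X,d^X)$ and $r\ge 0$, $\mathrm{VR}_r(X)$ is the graph on $X$ with edges $[x,y]$ whenever $d^X(x,y)\le r$; $\mathrm{PH}_0(X)$ is the persistence module $r\mapsto H_0(\mathrm{VR}_r(X))$ (vector space freely generated by connected components) with structure maps $\rho_{rs}$ induced by inclusion, so $\mathrm{PH}_0(X)_0$ has basis $X$. Its barcode is the multiset $(S^V,m^V)$ of finite death values $b>0$ of the bars $[0,b)$ in its interval decomposition (infinite bar excluded). For a persistence module $U$ and $b>0$: $\ker^+_b(U)=\ker(\rho^U_{0b})$, $\ker^-_b(U)=\bigcup_{0\le r<b}\ker(\rho^U_{0r})$. The linear map $f_0$ sends basis element $x$ to $f_\bullet(x)$. The block function is $\mathcal{M}^0_f(a,b)=\dim\frac{f_0(\ker^+_a V)\cap \ker^+_b U}{f_0(\ker^-_a V)\cap\ker^+_b U+f_0(\ker^+_a V)\cap \ker^-_b U}$. *)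

From HB Require Import structures.
From mathcomp Require Import all_boot all_order all_algebra.
From mathcomp Require Import boolp.
Set Implicit Arguments. Unset Strict Implicit. Unset Printing Implicit Defensive.
Import Order.TTheory GRing.Theory Num.Theory.
Local Open Scope ring_scope.

Definition is_metric (R : realFieldType) (X : finType) (d : X -> X -> R) : Prop :=
  [/\ forall x, d x x = 0,
      forall x y, x != y -> 0 < d x y,
      forall x y, d x y = d y x &
      forall x y z, d x z <= d x y + d y z].

Notation F2 := ('F_2)%type.

Definition V0 (X : finType) := {ffun X -> F2^o}.

(* H_0(VR_r(X)) : vector space freely generated by the connected components,
   realised inside the vector space with basis {set X} *)
Definition H0space (X : finType) := {ffun {set X} -> F2^o}.

Section PH0.
Variables (R : realFieldType) (X : finType) (d : X -> X -> R).

Definition VRedge (r : R) : rel X := fun x y => d x y <= r.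

Definition comp (r : R) (x : X) : {set X} := [set y | connect (VRedge r) x y].

Definition hbasis (C : {set X}) : H0space X := [ffun D => if D == C then 1 else 0].

Definition rho0_fun (r : R) (v : V0 X) : H0space X :=
  \sum_(x : X) v x *: hbasis (comp r x).

Definition rho0 (r : R) : 'Hom(V0 X, H0space X) := linfun (rho0_fun r).

Definition kerp (b : R) : {vspace V0 X} := lker (rho0 b).

(* ker^-_b = union_{0 <= r < b} ker rho_{0r}; this nested union of subspaces is
   a subspace, represented here as the span of the union *)
Definition in_kerm (b : R) (v : V0 X) : bool :=
  `[< exists r : R, (0 <= r) /\ (r < b) /\ (v \in kerp r) >].

Definition kerm (b : R) : {vspace V0 X} :=
  span [seq v <- enum (V0 X) | in_kerm b v].

(* death values of the finite bars of PH_0(X): b > 0 and the multiplicity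
   m(b) = dim ker^+_b - dim ker^-_b is positive *)
Definition deathset (b : R) : Prop := 0 < b /\ (\dim (kerm b) < \dim (kerp b))%N.
End PH0.

Definition f0_fun (X Z : finType) (f : X -> Z) (v : V0 X) : V0 Z :=
  [ffun z => \sum_(x | f x == z) v x].
Definition f0 (X Z : finType) (f : X -> Z) : 'Hom(V0 X, V0 Z) := linfun (f0_fun f).

(* dimension of a quotient N / D of subspaces with D <= N *)
Definition qdim (K : fieldType) (vT : vectType K) (N D : {vspace vT}) : nat :=
  (\dim N - \dim D)%N.

Definition blockM (R : realFieldType) (X Z : finType) (dX : X -> X -> R)
  (dZ : Z -> Z -> R) (f : X -> Z) (a b : R) : nat :=
  qdim ((f0 f @: kerp dX a) :&: kerp dZ b)
       ((f0 f @: kerm dX a) :&: kerp dZ b + (f0 f @: kerp dX a) :&: kerm dZ b)%VS.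

From Pilot Require Import Defs.
From HB Require Import structures.
From mathcomp Require Import all_boot all_order all_algebra.
From mathcomp Require Import boolp zify.

Set Implicit Arguments.
Unset Strict Implicit.
Unset Printing Implicit Defensive.
Import Order.TTheory GRing.Theory Num.Theory.
Local Open Scope ring_scope.

(* Kernels grow along a persistence module, so A^- <= A^+ and B^- <= B^+.  For
   two such pairs of subspaces the modular law gives
     (A^+ + B^-) :&: (A^- + B^+) = (A^- + B^-) + A^+ :&: B^+   and
     (A^- + B^-) :&: (A^+ :&: B^+) = A^- :&: B^+ + A^+ :&: B^-,
   so modulo A^- + B^- the intersection of the two quotients is the image of
   A^+ :&: B^+, whose dimension is that of the block quotient.  The identity is
   pure linear algebra. *)

Section SubspaceLattice.
Variables (K : fieldType) (vT wT : vectType K).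
Implicit Types U V W : {vspace vT}.

Lemma modularv U V W : (U <= W)%VS -> ((U + V) :&: W = U + V :&: W)%VS.
Proof.
move=> sUW; apply/eqP; rewrite eqEsubv; apply/andP; split; last first.
  rewrite subv_add !subv_cap addvSl sUW capvSr !andbT.
  exact: subv_trans (capvSl _ _) (addvSr _ _).
apply/subvP => _ /memv_capP[/memv_addP[u Uu [v Vv ->]] uvW].
rewrite memv_add // memv_cap Vv.
have -> : v = (u + v) - u by rewrite addrC addKr.
by rewrite memvB // (subvP sUW).
Qed.

Lemma limg_cap_ker (f : 'Hom(vT, wT)) U V :
  (lker f <= U)%VS -> (f @: (U :&: V) = f @: U :&: f @: V)%VS.
Proof.
move=> sKU; apply/eqP; rewrite eqEsubv limg_cap /=.
apply/subvP => _ /memv_capP[/memv_imgP[u Uu ->] /memv_imgP[v Vv fuv]].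
have vU : v \in U.
  by rewrite -(subrK u v) memvD // (subvP sKU) // memv_ker linearB /= fuv subrr.
by rewrite fuv memv_img // memv_cap vU.
Qed.

Lemma dim_limg_ker (f : 'Hom(vT, wT)) U :
  (lker f <= U)%VS -> \dim (f @: U) = (\dim U - \dim (lker f))%N.
Proof. by move=> sKU; rewrite -(limg_ker_dim f U) (capv_idPr sKU) addKn. Qed.

Section Filtrations.
Variables (Am Ap Bm Bp : {vspace vT}).
Hypotheses (sA : (Am <= Ap)%VS) (sB : (Bm <= Bp)%VS).

Lemma capv_cross_sums :
  ((Ap + Bm) :&: (Am + Bp) = (Am + Bm) + Ap :&: Bp)%VS.
Proof.
rewrite capvC modularv; last exact: subv_trans sA (addvSl _ _).
by rewrite [(Bp :&: _)%VS]capvC [(Ap + Bm)%VS]addvC modularv // addvA.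
Qed.

Lemma capv_lower_sum :
  ((Am + Bm) :&: (Ap :&: Bp) = Am :&: Bp + Ap :&: Bm)%VS.
Proof.
have sBmAp : (Bm :&: Ap <= Bp)%VS by exact: subv_trans (capvSl _ _) sB.
rewrite capvA modularv // addvC modularv //.
by rewrite addvC [(Bm :&: _)%VS]capvC.
Qed.

Lemma dim_block_quotient (q : 'Hom(vT, wT)) :
  lker q = (Am + Bm)%VS ->
  (\dim (Ap :&: Bp) - \dim (Am :&: Bp + Ap :&: Bm))%N =
  \dim ((q @: (Ap + Bm)) :&: (q @: (Am + Bp)))%VS.
Proof.
move=> kerq.
have sKP : (lker q <= Ap + Bm)%VS by rewrite kerq addvS.
rewrite -limg_cap_ker // capv_cross_sums.
rewrite dim_limg_ker; last by rewrite kerq addvSl.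
have := dimv_sum_cap (Am + Bm) (Ap :&: Bp).
rewrite capv_lower_sum kerq; lia.
Qed.

End Filtrations.
End SubspaceLattice.

Section PersistentKernels.
Variables (R : realFieldType) (X : finType) (d : X -> X -> R).

Lemma rho0_fun_is_linear r : linear (rho0_fun d r).
Proof.
move=> c u v; rewrite /rho0_fun scaler_sumr -big_split /=.
by apply: eq_bigr => x _; rewrite !ffunE scalerDl scalerA.
Qed.

HB.instance Definition _ r := GRing.isLinear.Build F2 (V0 X) (H0space X) _
  (rho0_fun d r) (rho0_fun_is_linear r).

Lemma rho0E r v C : rho0 d r v C = \sum_(x | Defs.comp d r x == C) v x.
Proof.
rewrite lfunE /rho0_fun sum_ffunE (bigID (fun x => Defs.comp d r x == C)) /=.
rewrite [X in _ + X]big1 ?addr0 => [|x /negbTE nxC]; last first.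
  by rewrite !ffunE eq_sym nxC scaler0.
by apply: eq_bigr => x /eqP ->; rewrite !ffunE eqxx; exact: mulr1.
Qed.

Lemma comp_eq_connect r x y :
  Defs.comp d r x = Defs.comp d r y -> connect (VRedge d r) x y.
Proof.
move=> exy; have : y \in Defs.comp d r y by rewrite inE connect0.
by rewrite -exy inE.
Qed.

Lemma comp_mono r s x y :
  r <= s -> Defs.comp d r x = Defs.comp d r y -> Defs.comp d s x = Defs.comp d s y.
Proof.
move=> rs exy.
have sub : subrel (connect (VRedge d r)) (connect (VRedge d s)).
  by apply: connect_sub => u w /le_trans/(_ rs) uw; apply: connect1.
have cxy := sub _ _ (comp_eq_connect exy).
have cyx := sub _ _ (comp_eq_connect (esym exy)).
apply/setP => z; rewrite !inE; apply/idP/idP; exact: connect_trans.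
Qed.

Lemma memv_kerpP r (v : V0 X) :
  reflect (forall C, \sum_(x | Defs.comp d r x == C) v x = 0) (v \in kerp d r).
Proof.
have -> : (v \in kerp d r) = (rho0 d r v == 0) by exact: memv_ker.
apply: (iffP eqP) => [rv0 C | rv0]; first by rewrite -rho0E rv0 ffunE.
by apply/ffunP => C; rewrite rho0E rv0 ffunE.
Qed.

Lemma kerp_mono r s : r <= s -> (kerp d r <= kerp d s)%VS.
Proof.
move=> rs; apply/subvP => v /memv_kerpP rv0; apply/memv_kerpP => D.
rewrite (partition_big (Defs.comp d r)
   (fun C => [exists y, (Defs.comp d r y == C) && (Defs.comp d s y == D)])) /=; last first.
  by move=> x sxD; apply/existsP; exists x; rewrite eqxx.
apply: big1 => C /existsP[y /andP[/eqP ryC /eqP syD]].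
apply: etrans (rv0 C); apply: eq_bigl => x.
apply/andP/idP => [[//]|rxC]; split=> //.
by rewrite (comp_mono rs (etrans (eqP rxC) (esym ryC))) syD.
Qed.

Lemma kerm_sub a : (kerm d a <= kerp d a)%VS.
Proof.
apply/span_subvP => v; rewrite mem_filter => /andP[/asboolP[r [_ [ra vr]]] _].
exact: subvP (kerp_mono (ltW ra)) v vr.
Qed.

End PersistentKernels.

(* U_0/(A^- + B^-) is modelled by any linear map q with kernel A^- + B^-; the
   two quotient subspaces are images under q. *)
Theorem lemma3p4 (R : realFieldType) (X Z : finType)
  (dX : X -> X -> R) (dZ : Z -> Z -> R) (f : X -> Z)
  (hX : is_metric dX) (hZ : is_metric dZ) (a b : R)
  (ha : deathset dX a) (hb : deathset dZ b)
  (W : vectType F2) (q : 'Hom(V0 Z, W))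
  (hq : lker q = ((f0 f @: kerm dX a) + kerm dZ b)%VS) :
  blockM dX dZ f a b =
  \dim ((q @: ((f0 f @: kerp dX a) + kerm dZ b)) :&:
        (q @: ((f0 f @: kerm dX a) + kerp dZ b)))%VS.
Proof.
apply: dim_block_quotient hq.
  exact/limgS/kerm_sub.
exact: kerm_sub.
Qed.
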